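(* The action of $O_d(\mathbb C)$ on $U_d(\mathbb C)\subset V$ is free.
   Context: Fix $d\ge2$. $V=\mathbb C^d\oplus\mathfrak{so}(d,\mathbb C)$, elements $(v,M)$ with $v=(c_1,\dots,c_d)^\top$, $M$ complex skew-symmetric, $M_{ij}=c_{ij}=-M_{ji}$ for $i<j$; $O_d(\mathbb C)=\{A\in\mathbb C^{d\times d}:AA^\top=I\}$ acts by $A\cdot(v,M)=(Av,AMA^\top)$. $L^{(1)}=\{c_1=\dots=c_{d-1}=0\}$, and for $2\le i\le d-1$, $L^{(i)}=\{(v,M)\in L^{(i-1)}:c_{k(d-i+2)}=0,\ 1\le k\le d-i\}$. Let $f_1=c_1^2+\dots+c_d^2$; for $2\le i\le d-1$ let $f_i$ be the $O_d(\mathbb C)$-invariant rational function on $V$ with $f_i|_{L^{(i-1)}}=c_{1(d-i+2)}^2+\dots+c_{(d-i+1)(d-i+2)}^2$; let $f_d$ be the invariant rational function with $f_d|_{L^{(d-1)}}=c_{12}^2$ (these exist and are uniquely determined). $U_d(\mathbb C)$ is the set of points in the domain of every $f_k$ with $\prod_kf_k\neq0$. An action is free if all stabilizers are trivial. *)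

From mathcomp Require Import all_boot all_algebra.
From mathcomp Require Import Rstruct complex.
Set Implicit Arguments. Unset Strict Implicit. Unset Printing Implicit Defensive.
Import GRing.Theory Num.Theory.
Local Open Scope ring_scope.

Definition Cx : numClosedFieldType := (Rdefinitions.R)[i].

(** Ambient space C^d x M_d(C); V = C^d (+) so(d,C) is the subset where the
    matrix component is skew-symmetric. *)
Definition Vt (d : nat) : Type := ('cV[Cx]_d * 'M[Cx]_d)%type.

Definition inV (d : nat) (x : Vt d) : Prop := (x.2)^T = - x.2.

Definition inO (d : nat) (A : 'M[Cx]_d) : Prop := A *m A^T = 1%:M.

Definition act (d : nat) (A : 'M[Cx]_d) (x : Vt d) : Vt d :=
  (A *m x.1, A *m x.2 *m A^T).

(** Coordinates with the paper's 1-based indexing: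
    cvec x k = c_k (k-th entry of v), cmat x k l = c_{kl} = M_{kl}. *)
Definition cvec (d : nat) (x : Vt d) (k : nat) : Cx :=
  match @insub nat (fun n => n < d)%N 'I_d k.-1 with
  | Some a => x.1 a ord0 | None => 0 end.

Definition cmat (d : nat) (x : Vt d) (k l : nat) : Cx :=
  match @insub nat (fun n => n < d)%N 'I_d k.-1,
        @insub nat (fun n => n < d)%N 'I_d l.-1 with
  | Some a, Some b => x.2 a b | _, _ => 0 end.

(** Polynomial functions on the ambient space (generated by constants and
    coordinate functions under + and * ); restricted to V these are exactly
    the polynomial functions on V. *)
Inductive polyfun (d : nat) : (Vt d -> Cx) -> Prop :=
| pf_const (c : Cx) : polyfun (fun _ => c)
| pf_vcoord (a : 'I_d) : polyfun (fun x => x.1 a ord0)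
| pf_mcoord (a b : 'I_d) : polyfun (fun x => x.2 a b)
| pf_add p q : polyfun p -> polyfun q -> polyfun (fun x => p x + q x)
| pf_mul p q : polyfun p -> polyfun q -> polyfun (fun x => p x * q x).

(** A rational function on V, given by a representative num/den with
    den not identically zero on V. *)
Record ratfun (d : nat) := RatFun {
  num : Vt d -> Cx;
  den : Vt d -> Cx;
  num_poly : polyfun num;
  den_poly : polyfun den;
  den_nz : exists x, inV x /\ den x != 0 }.

Definition rf_eq (d : nat) (f g : ratfun d) : Prop :=
  forall x, inV x -> num f x * den g x = num g x * den f x.

Definition rf_value_at (d : nat) (f : ratfun d) (x : Vt d) (v : Cx) : Prop :=
  inV x /\ exists g : ratfun d,
    rf_eq f g /\ den g x != 0 /\ v = num g x / den g x.

Definition rf_invariant (d : nat) (f : ratfun d) : Prop :=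
  forall A : 'M[Cx]_d, inO A ->
  forall x, inV x -> num f (act A x) * den f x = num f x * den f (act A x).

(** The restriction of f to the subset L of V (a linear subspace) is the
    polynomial function h: some representative of f has denominator not
    identically zero on L, and num = h * den on L. *)
Definition rf_restricts_to (d : nat) (f : ratfun d) (L : Vt d -> Prop)
  (h : Vt d -> Cx) : Prop :=
  exists g : ratfun d, rf_eq f g /\ (exists x, L x /\ den g x != 0) /\
    forall x, L x -> num g x = h x * den g x.

(** The slices L^{(i)}, 1 <= i <= d-1 (L^{(0)} := V, unused). *)
Fixpoint Lslice (d : nat) (i : nat) (x : Vt d) : Prop :=
  match i with
  | 0 => inV x
  | 1 => inV x /\ forall k, (1 <= k <= d - 1)%N -> cvec x k = 0
  | S i' => Lslice i' x /\
            forall k, (1 <= k <= d - i)%N -> cmat x k (d - i + 2) = 0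
  end.

Definition f1_poly (d : nat) (x : Vt d) : Cx :=
  \sum_(1 <= k < d.+1) cvec x k ^+ 2.

Definition fi_target (d i : nat) (x : Vt d) : Cx :=
  \sum_(1 <= k < (d - i + 1).+1) cmat x k (d - i + 2) ^+ 2.

Definition fd_target (d : nat) (x : Vt d) : Cx := cmat x 1 2 ^+ 2.

Definition is_f_family (d : nat) (f : nat -> ratfun d) : Prop :=
  (forall x, inV x -> num (f 1%N) x = f1_poly x * den (f 1%N) x) /\
  (forall k, (1 <= k <= d)%N -> rf_invariant (f k)) /\
  (forall i, (2 <= i <= d - 1)%N ->
     rf_restricts_to (f i) (@Lslice d i.-1) (@fi_target d i)) /\
  rf_restricts_to (f d) (@Lslice d d.-1) (@fd_target d).

Definition in_U (d : nat) (f : nat -> ratfun d) (x : Vt d) : Prop :=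
  inV x /\ exists vals : nat -> Cx,
    (forall k, (1 <= k <= d)%N -> rf_value_at (f k) x (vals k)) /\
    \prod_(1 <= k < d.+1) vals k != 0.

From mathcomp Require Import all_boot all_algebra.
From mathcomp Require Import Rstruct complex.
From mathcomp Require Import ring zify.
Import GRing.Theory Num.Theory.
Local Open Scope ring_scope.

Set Implicit Arguments. Unset Strict Implicit. Unset Printing Implicit Defensive.

(* The Gram determinants G_j = det (K_j^T K_j) of the Krylov matrices
   K_j = [v, Mv, ..., M^(j-1) v] are O_d-invariant polynomials, and the
   invariants of the paper are f_1 = G_1 and f_k = G_k G_(k-2) / G_(k-1)^2.
   As the O_d-orbit of the slice L^(k-1) is dense, this identity only has to
   be checked at generic points of L^(k-1).  Householder reflections acting on
   the first coordinates move such a point, column by column, to a reduced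
   point (v on the last axis, M zero above its subdiagonal) without changing
   either side; there the Krylov matrix is triangular along the antidiagonal
   and both sides are computed explicitly.  Reducing column j uses the
   identity for larger k, whence a downward induction on k.
   On U_d all f_k are nonzero, so G_d(x) != 0 and K_d(x) is invertible; a
   stabilizer A of x satisfies A K_d(x) = K_d(x), hence A = 1. *)

Lemma poly_eq0_of_horner (R : numDomainType) (p : {poly R}) :
  (forall t, p.[t] = 0) -> p = 0.
Proof.
move=> p0; apply: (@roots_geq_poly_eq0 _ p [seq i%:R | i <- iota 0 (size p)]).
- by apply/allP => _ /mapP [i _ ->]; apply/rootP.
- by rewrite map_inj_uniq ?iota_uniq // => i j /eqP; rewrite eqr_nat => /eqP.
- by rewrite size_map size_iota.
Qed.

Section LinePolynomials.
Variable d : nat.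
Implicit Types (y : Vt d) (F G : Vt d -> Cx) (S : Vt d -> Prop).

Definition line y (y0 : Vt d) (t : Cx) : Vt d :=
  (y.1 + t *: (y0.1 - y.1), y.2 + t *: (y0.2 - y.2)).

(* Polynomial functions are only used through their restrictions to affine
   lines, which are polynomials in one variable. *)
Definition linepoly F :=
  forall y y0, exists p : {poly Cx}, forall t, F (line y y0 t) = p.[t].

Definition line_closed S := forall y y0 t, S y -> S y0 -> S (line y y0 t).

Lemma line0 y y0 : line y y0 0 = y.
Proof. by case: y => v M; rewrite /line /= !scale0r !addr0. Qed.

Lemma line1 y y0 : line y y0 1 = y0.
Proof. by case: y0 => v M; rewrite /line /= !scale1r; congr pair; rewrite addrC subrK. Qed.

Lemma linepoly_mul_eq0 S F G : line_closed S -> linepoly F -> linepoly G ->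
  (exists y0, S y0 /\ G y0 != 0) -> (forall y, S y -> G y * F y = 0) ->
  forall y, S y -> F y = 0.
Proof.
move=> Sline lF lG [y0 [Sy0 Gy0]] GF0 y Sy.
have [p Fp] := lF y y0; have [q Gq] := lG y y0.
have q_neq0 : q != 0.
  by apply: contraNneq Gy0 => q0; rewrite -(line1 y y0) Gq q0 horner0.
have /eqP : q * p = 0.
  by apply: poly_eq0_of_horner => t; rewrite hornerM -Fp -Gq GF0 //; apply: Sline.
by rewrite mulf_eq0 (negbTE q_neq0) -(line0 y y0) Fp => /eqP ->; rewrite horner0.
Qed.

Lemma linepoly_ext F G : (forall y, F y = G y) -> linepoly F -> linepoly G.
Proof. by move=> FG lF y y0; have [p Fp] := lF y y0; exists p => t; rewrite -FG. Qed.

Lemma linepoly_const c : linepoly (fun _ => c).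
Proof. by move=> y y0; exists c%:P => t; rewrite hornerC. Qed.

Lemma linepoly_add F G : linepoly F -> linepoly G -> linepoly (fun y => F y + G y).
Proof.
move=> lF lG y y0; have [p Fp] := lF y y0; have [q Gq] := lG y y0.
by exists (p + q) => t; rewrite hornerD Fp Gq.
Qed.

Lemma linepoly_sub F G : linepoly F -> linepoly G -> linepoly (fun y => F y - G y).
Proof.
move=> lF lG y y0; have [p Fp] := lF y y0; have [q Gq] := lG y y0.
by exists (p - q) => t; rewrite hornerD hornerN Fp Gq.
Qed.

Lemma linepoly_mul F G : linepoly F -> linepoly G -> linepoly (fun y => F y * G y).
Proof.
move=> lF lG y y0; have [p Fp] := lF y y0; have [q Gq] := lG y y0.
by exists (p * q) => t; rewrite hornerM Fp Gq.
Qed.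

Lemma linepoly_exp F k : linepoly F -> linepoly (fun y => F y ^+ k).
Proof.
move=> lF; elim: k => [|k IHk]; first exact: linepoly_const.
by apply: linepoly_ext (linepoly_mul lF IHk) => y; rewrite exprS.
Qed.

Lemma linepoly_sum (I : Type) (r : seq I) (P : pred I) (Fs : I -> Vt d -> Cx) :
  (forall i, linepoly (Fs i)) -> linepoly (fun y => \sum_(i <- r | P i) Fs i y).
Proof.
move=> lFs; elim: r => [|i r IHr].
  by apply: linepoly_ext (linepoly_const 0) => y; rewrite big_nil.
have lFi : linepoly (fun y => if P i then Fs i y else 0).
  by case: (P i); [apply: lFs | apply: linepoly_const].
apply: linepoly_ext (linepoly_add lFi IHr) => y.
by rewrite big_cons; case: (P i); rewrite ?add0r.
Qed.

Lemma linepoly_prod (I : Type) (r : seq I) (P : pred I) (Fs : I -> Vt d -> Cx) :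
  (forall i, linepoly (Fs i)) -> linepoly (fun y => \prod_(i <- r | P i) Fs i y).
Proof.
move=> lFs; elim: r => [|i r IHr].
  by apply: linepoly_ext (linepoly_const 1) => y; rewrite big_nil.
have lFi : linepoly (fun y => if P i then Fs i y else 1).
  by case: (P i); [apply: lFs | apply: linepoly_const].
apply: linepoly_ext (linepoly_mul lFi IHr) => y.
by rewrite big_cons; case: (P i); rewrite ?mul1r.
Qed.

Lemma linepoly_vcoord (a : 'I_d) : linepoly (fun y => y.1 a ord0).
Proof.
move=> y y0; exists ((y.1 a ord0)%:P + (y0.1 a ord0 - y.1 a ord0)%:P * 'X) => t.
by rewrite hornerD hornerMX !hornerC /line /= !mxE mulrC.
Qed.

Lemma linepoly_mcoord (a b : 'I_d) : linepoly (fun y => y.2 a b).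
Proof.
move=> y y0; exists ((y.2 a b)%:P + (y0.2 a b - y.2 a b)%:P * 'X) => t.
by rewrite hornerD hornerMX !hornerC /line /= !mxE mulrC.
Qed.

Lemma linepoly_polyfun F : polyfun F -> linepoly F.
Proof.
elim=> [c|a|a b|p q _ lp _ lq|p q _ lp _ lq].
- exact: linepoly_const.
- exact: linepoly_vcoord.
- exact: linepoly_mcoord.
- exact: linepoly_add.
- exact: linepoly_mul.
Qed.

Lemma act_line (A : 'M[Cx]_d) y y0 t :
  act A (line y y0 t) = line (act A y) (act A y0) t.
Proof.
rewrite /act /line /=; congr pair; first by rewrite mulmxDr -scalemxAr mulmxBr.
by rewrite mulmxDr -scalemxAr mulmxBr mulmxDl -scalemxAl mulmxBl.
Qed.

Lemma linepoly_act (A : 'M[Cx]_d) F : linepoly F -> linepoly (fun y => F (act A y)).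
Proof.
move=> lF y y0; have [p Fp] := lF (act A y) (act A y0).
by exists p => t; rewrite act_line.
Qed.

Definition linepolymx m n (F : Vt d -> 'M[Cx]_(m, n)) :=
  forall i j, linepoly (fun y => F y i j).

Lemma linepolymx_vec : linepolymx (fun y => y.1).
Proof. by move=> i j; rewrite (ord1 j); apply: linepoly_vcoord. Qed.

Lemma linepolymx_mat : linepolymx (fun y => y.2).
Proof. exact: linepoly_mcoord. Qed.

Lemma linepolymx_mul m n p (F : Vt d -> 'M[Cx]_(m, n)) (G : Vt d -> 'M[Cx]_(n, p)) :
  linepolymx F -> linepolymx G -> linepolymx (fun y => F y *m G y).
Proof.
move=> lF lG i j.
have lFG : linepoly (fun y => \sum_k F y i k * G y k j).
  by apply: linepoly_sum => k; apply: linepoly_mul.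
by apply: linepoly_ext lFG => y; rewrite mxE.
Qed.

Lemma linepolymx_tr m n (F : Vt d -> 'M[Cx]_(m, n)) :
  linepolymx F -> linepolymx (fun y => (F y)^T).
Proof. by move=> lF i j; apply: linepoly_ext (lF j i) => y; rewrite mxE. Qed.

Lemma linepolymx_exp (F : Vt d -> 'M[Cx]_d) k :
  linepolymx F -> linepolymx (fun y => F y ^+ k).
Proof.
move=> lF; elim: k => [|k IHk] i j.
  exact: linepoly_const.
by apply: linepoly_ext (linepolymx_mul lF IHk i j) => y; rewrite exprS mulmxE.
Qed.

Lemma linepoly_det n (F : Vt d -> 'M[Cx]_n) :
  linepolymx F -> linepoly (fun y => \det (F y)).
Proof.
move=> lF; apply: linepoly_sum => s; apply: linepoly_mul; first exact: linepoly_const.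
by apply: linepoly_prod.
Qed.

End LinePolynomials.

Section OrthogonalAction.
Variable d : nat.
Implicit Types (y : Vt d) (A B : 'M[Cx]_d).

Lemma inO_trmxK A : inO A -> A^T *m A = 1%:M.
Proof. exact: mulmx1C. Qed.

Lemma inO1 : inO (1%:M : 'M[Cx]_d).
Proof. by rewrite /inO trmx1 mulmx1. Qed.

Lemma inO_mul A B : inO A -> inO B -> inO (A *m B).
Proof. by move=> OA OB; rewrite /inO trmx_mul mulmxA -(mulmxA A) OB mulmx1. Qed.

Lemma inO_tr A : inO A -> inO A^T.
Proof. by move=> OA; rewrite /inO trmxK inO_trmxK. Qed.

Lemma act1 y : act 1%:M y = y.
Proof. by case: y => v M; rewrite /act /= trmx1 !mul1mx mulmx1. Qed.

Lemma act_mul A B y : act (A *m B) y = act A (act B y).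
Proof. by rewrite /act /= trmx_mul !mulmxA. Qed.

Lemma act_trK A y : inO A -> act A^T (act A y) = y.
Proof. by move=> OA; rewrite -act_mul inO_trmxK // act1. Qed.

Lemma act_Ktr A y : inO A -> act A (act A^T y) = y.
Proof. by move=> OA; rewrite -act_mul OA act1. Qed.

Lemma act_inV A y : inV y -> inV (act A y).
Proof. by rewrite /inV /act /= !trmx_mul trmxK => ->; rewrite mulNmx mulmxN mulmxA. Qed.

Lemma line_closed_inV : line_closed (@inV d).
Proof.
move=> y y0 t; rewrite /inV => /matrixP Vy /matrixP Vy0; apply/matrixP => i j.
by move: (Vy i j) (Vy0 i j); rewrite /line !mxE => -> ->; ring.
Qed.

End OrthogonalAction.

Section KrylovGram.
Variable d : nat.
Implicit Types (y : Vt d) (A : 'M[Cx]_d).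

Definition krylov_vec m y : 'cV[Cx]_d := y.2 ^+ m *m y.1.

Definition krylov j y : 'M[Cx]_(d, j) := \matrix_(r, m) krylov_vec m y r ord0.

Definition gram j y : Cx := \det ((krylov j y)^T *m krylov j y).

Lemma krylovE j y r m : krylov j y r m = krylov_vec m y r ord0.
Proof. by rewrite mxE. Qed.

Lemma krylov_vecS m y : krylov_vec m.+1 y = y.2 *m krylov_vec m y.
Proof. by rewrite /krylov_vec exprS -mulmxE mulmxA. Qed.

Lemma exp_conj_inO A M m : inO A -> (A *m M *m A^T) ^+ m = A *m M ^+ m *m A^T.
Proof.
move=> OA; elim: m => [|m IHm]; first by rewrite !expr0 mulmx1 OA.
rewrite !exprS IHm -!mulmxE !mulmxA; congr (_ *m _).
by rewrite -!mulmxA (mulmxA A^T) inO_trmxK // mul1mx.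
Qed.

Lemma krylov_vec_act A y m : inO A -> krylov_vec m (act A y) = A *m krylov_vec m y.
Proof.
by move=> OA; rewrite /krylov_vec exp_conj_inO // !mulmxA -(mulmxA _ A^T) inO_trmxK // mulmx1.
Qed.

Lemma krylov_act A y j : inO A -> krylov j (act A y) = A *m krylov j y.
Proof.
move=> OA; apply/matrixP => r m; rewrite krylovE krylov_vec_act // !mxE.
by apply: eq_bigr => k _; rewrite krylovE.
Qed.

Lemma gram_act A y j : inO A -> gram j (act A y) = gram j y.
Proof.
by move=> OA; rewrite /gram krylov_act // trmx_mul mulmxA -(mulmxA _ A^T) inO_trmxK // mulmx1.
Qed.

Lemma linepoly_gram j : linepoly (gram j).
Proof.
have lK : linepolymx (krylov j).
  move=> r m; apply: (@linepoly_ext _ (fun y => krylov_vec m y r ord0)).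
    by move=> y; rewrite krylovE.
  by apply: linepolymx_mul; [apply/linepolymx_exp/linepolymx_mat | apply: linepolymx_vec].
by apply/linepoly_det/linepolymx_mul => //; apply: linepolymx_tr.
Qed.

Lemma gram0 y : gram 0 y = 1.
Proof. by rewrite /gram det_mx00. Qed.

Lemma gram1 y : gram 1 y = \sum_(r < d) y.1 r ord0 ^+ 2.
Proof.
rewrite /gram det_mx11 !mxE; apply: eq_bigr => r _.
by rewrite mxE !krylovE /krylov_vec expr0 mul1mx expr2.
Qed.

(* [A] fixes the Krylov matrix of [x], which is invertible when [gram d x != 0]. *)
Lemma inO_fix_gram_neq0 A x : inO A -> act A x = x -> gram d x != 0 -> A = 1%:M.
Proof.
move=> OA Ax Gx.
have AK : A *m krylov d x = krylov d x by rewrite -krylov_act // Ax.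
have K_unit : krylov d x \in unitmx.
  rewrite unitmxE unitfE; apply: contra Gx.
  by rewrite /gram det_mulmx det_tr => /eqP ->; rewrite mul0r.
by rewrite -(mulmxK K_unit A) AK mulmxV.
Qed.

End KrylovGram.

Section Slices.
Variable d : nat.
Implicit Types (y : Vt d).

Lemma insub_ord (r : 'I_d) : @insub nat (fun n => (n < d)%N) 'I_d r = Some r.
Proof. by rewrite insubT //= => rd; congr Some; apply: val_inj. Qed.

Lemma cvecE y (r : 'I_d) : cvec y r.+1 = y.1 r ord0.
Proof. by rewrite /cvec /= insub_ord. Qed.

Lemma cmatE y (a b : 'I_d) : cmat y a.+1 b.+1 = y.2 a b.
Proof. by rewrite /cmat /= !insub_ord. Qed.

(* [slice i] is [Lslice i] with 0-based indices: for [0 < i] the vector lies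
   on the last axis, and the last [i - 1] columns of the matrix vanish above
   the subdiagonal. *)
Definition slice i y :=
  [/\ inV y, (0 < i)%N -> forall r : 'I_d, (r < d.-1)%N -> y.1 r ord0 = 0 &
      forall r j : 'I_d, (d - i < j)%N -> (r.+1 < j)%N -> y.2 r j = 0].

Lemma slice0 y : inV y -> slice 0 y.
Proof. by split=> // r j; move: (ltn_ord j); lia. Qed.

Lemma slice_le i i' y : (i' <= i)%N -> slice i y -> slice i' y.
Proof.
move=> i'i [Vy vy My]; split => // [i'0 r rd|r j jd rj]; first by apply: vy; lia.
by apply: My => //; lia.
Qed.

Lemma line_closed_slice i : line_closed (slice i).
Proof.
move=> y y0 t [Vy vy My] [Vy0 vy0 My0]; split; first exact: line_closed_inV.
  by move=> i0 r rd; rewrite /line /= !mxE vy // vy0 // subrr mulr0 addr0.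
by move=> r j jd rj; rewrite /line /= !mxE My // My0 // subrr mulr0 addr0.
Qed.

Lemma sliceS i y : (0 < i)%N -> (i.+1 < d)%N ->
  slice i.+1 y <->
  slice i y /\ forall r j : 'I_d, (j : nat) = (d - i)%N -> (r.+1 < j)%N -> y.2 r j = 0.
Proof.
move=> i0 id; split.
- case=> Vy vy My; split; last by move=> r j jd; apply: My; lia.
  by split=> // [_|r j jd]; [apply: vy | apply: My; lia].
- case=> [[Vy vy My] Mj]; split=> // [_|r j jd]; first exact: vy.
  by case: (ltnP (d - i) j) => ji; [apply: My | apply: Mj; lia].
Qed.

Lemma LsliceE i y : (i < d)%N -> Lslice i y <-> slice i y.
Proof.
elim: i => [|[|i] IHi] id.
- split=> [Vy|[]//]; split=> // r j; move: (ltn_ord j); lia.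
- split=> [[Vy vy]|[Vy vy _]].
    split=> // [_ r rd|r j]; last by move: (ltn_ord j); lia.
    by rewrite -cvecE vy //; lia.
  split=> // k /andP [k1 kd]; have kd' : (k.-1 < d)%N by lia.
  by rewrite -(prednK k1) (cvecE y (Ordinal kd')) vy //=; lia.
- rewrite sliceS // -IHi; last by lia.
  split=> -[Ly Mj]; split=> //.
    move=> r j jd rj.
    have -> : y.2 r j = cmat y r.+1 (d - i.+2 + 2) by rewrite -cmatE; congr cmat; lia.
    by apply: Mj; lia.
  move=> k /andP [k1 kd]; have kd' : (k.-1 < d)%N by lia.
  have jd : (d - i.+2 + 1 < d)%N by lia.
  rewrite -(prednK k1) (_ : (d - i.+2 + 2 = (Ordinal jd).+1)%N); last by rewrite /=; lia.
  by rewrite (_ : k.-1.+1 = (Ordinal kd').+1) // cmatE; apply: Mj => /=; lia.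
Qed.

Definition colsq_above (j : 'I_d) y := \sum_(r < d | (r < j)%N) y.2 r j ^+ 2.

Lemma linepoly_colsq_above j : linepoly (colsq_above j).
Proof. by apply: linepoly_sum => r; apply/linepoly_exp/linepoly_mcoord. Qed.

Lemma f1_polyE y : f1_poly y = gram 1 y.
Proof.
by rewrite gram1 /f1_poly big_add1 /= big_mkord; apply: eq_bigr => r _; rewrite cvecE.
Qed.

Lemma fi_targetE i (j : 'I_d) y : (2 <= i <= d)%N -> (j : nat) = (d - i + 1)%N ->
  fi_target i y = colsq_above j y.
Proof.
move=> /andP [i2 id] jE; rewrite /fi_target /colsq_above big_add1 /= big_mkord.
rewrite (big_ord_widen d (fun k => cmat y k.+1 (d - i + 2) ^+ 2)); last by lia.
apply: eq_big => [r|r _]; first by rewrite jE.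
by rewrite (_ : (d - i + 2 = j.+1)%N) ?cmatE //; lia.
Qed.

Lemma fd_targetE y : fd_target y = fi_target d y.
Proof. by rewrite /fd_target /fi_target subnn add0n big_nat1. Qed.

End Slices.

Lemma sum_kronecker_l (R : pzSemiRingType) (I : finType) (i0 : I) (F : I -> R) :
  \sum_i (i == i0)%:R * F i = F i0.
Proof.
rewrite (bigD1 i0) //= eqxx mul1r big1 ?addr0 // => i /negbTE ->.
by rewrite mul0r.
Qed.

Lemma sum_kronecker_r (R : pzSemiRingType) (I : finType) (i0 : I) (F : I -> R) :
  \sum_i F i * (i == i0)%:R = F i0.
Proof.
rewrite (bigD1 i0) //= eqxx mulr1 big1 ?addr0 // => i /negbTE ->.
by rewrite mulr0.
Qed.

Section Reflections.
Variable d : nat.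
Implicit Types (u w X : 'I_d -> Cx) (H : 'M[Cx]_d).

Definition ulblock n H := forall a b : 'I_d, (n <= a)%N || (n <= b)%N -> H a b = (a == b)%:R.

Lemma ulblock1 n : ulblock n 1%:M.
Proof. by move=> a b _; rewrite mxE. Qed.

Lemma ulblock_le n m H : (n <= m)%N -> ulblock n H -> ulblock m H.
Proof. by move=> nm Hn a b ab; apply: Hn; case/orP: ab => ?; apply/orP; [left|right]; lia. Qed.

Lemma ulblock_mulmx_col n H m (X : 'M[Cx]_(d, m)) (r : 'I_d) j : ulblock n H ->
  (forall k : 'I_d, (k < n)%N -> X k j = 0) -> (H *m X) r j = X r j.
Proof.
move=> Hn Xj; rewrite mxE -(sum_kronecker_l r (fun k => X k j)); apply: eq_bigr => k _.
by case: (ltnP k n) => kn; [rewrite Xj // !mulr0 | rewrite Hn ?kn ?orbT // eq_sym].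
Qed.

Lemma mulmx_tr_ulblock n H m (X : 'M[Cx]_(m, d)) r (j : 'I_d) : ulblock n H ->
  (n <= j)%N -> (X *m H^T) r j = X r j.
Proof.
move=> Hn nj; rewrite mxE -(sum_kronecker_r j (fun k => X r k)).
by apply: eq_bigr => k _; rewrite mxE Hn ?nj ?orbT // eq_sym.
Qed.

Lemma ulblock_mul n H B : ulblock n H -> ulblock n B -> ulblock n (H *m B).
Proof.
move=> Hn Bn a b /orP [na|nb].
  transitivity (B a b); last by rewrite Bn ?na.
  rewrite mxE -(sum_kronecker_l a (fun k => B k b)); apply: eq_bigr => k _.
  by rewrite Hn ?na // eq_sym.
rewrite (ulblock_mulmx_col (n := n)) // => [|k kn]; first by rewrite Bn ?nb ?orbT.
by rewrite Bn ?nb ?orbT //; case: eqP kn => // ->; lia.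
Qed.

Definition dotf u w := \sum_k u k * w k.

Definition reflection w : 'M[Cx]_d :=
  \matrix_(a, b) ((a == b)%:R - 2 / dotf w w * w a * w b).

Lemma reflectionE w X a :
  \sum_k reflection w a k * X k = X a - 2 / dotf w w * w a * dotf w X.
Proof.
rewrite -(sum_kronecker_l a X) /dotf mulr_sumr -sumrB.
by apply: eq_bigr => k _; rewrite mxE eq_sym; ring.
Qed.

Lemma inO_reflection w : dotf w w != 0 -> inO (reflection w).
Proof.
move=> ww; apply/matrixP => a b; set R := reflection w.
rewrite [LHS]mxE (eq_bigr (fun k => R a k * R b k)); last by move=> k _; rewrite [R^T _ _]mxE.
rewrite reflectionE (_ : dotf w (fun k => R b k) = \sum_k R b k * w k); last first.
  by apply: eq_bigr => k _; rewrite mulrC.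
by rewrite reflectionE !mxE eq_sym; field.
Qed.

Lemma ulblock_reflection n w : (forall r : 'I_d, (n <= r)%N -> w r = 0) ->
  ulblock n (reflection w).
Proof.
by move=> wn a b /orP [] /wn w0; rewrite mxE w0 ?mulr0 ?mul0r subr0.
Qed.

(* Householder: with [s ^+ 2 = dotf u u] and [s != u p], the reflection along
   [u - s e_p] maps [u] to [s e_p]. *)
Lemma householder (p : 'I_d) u : (forall r : 'I_d, (p < r)%N -> u r = 0) ->
  dotf u u != 0 ->
  exists H s, [/\ inO H, ulblock p.+1 H & forall a, \sum_k H a k * u k = s * (a == p)%:R].
Proof.
move=> up uu.
set s0 := sqrtC (dotf u u).
have s0_2 : s0 ^+ 2 = dotf u u by rewrite sqrtCK.
have s0_neq0 : s0 != 0 by apply: contra uu => /eqP s00; rewrite -s0_2 s00 expr0n.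
pose s := if u p == s0 then - s0 else s0.
have s2 : s ^+ 2 = dotf u u by rewrite /s; case: ifP => _; rewrite ?sqrrN.
have s_neq0 : s != 0 by rewrite /s; case: ifP; rewrite ?oppr_eq0.
have s_up : s - u p != 0.
  rewrite /s subr_eq0; have [->|ups0] := eqVneq (u p) s0; last by rewrite eq_sym.
  by rewrite eq_sym -addr_eq0 -mulr2n mulrn_eq0 negb_or s0_neq0.
pose w k := u k - s * (k == p)%:R.
have dotwE X : dotf w X = dotf u X - s * X p.
  rewrite -(sum_kronecker_r p X) /dotf mulr_sumr -sumrB.
  by apply: eq_bigr => k _; rewrite /w; ring.
have wu : dotf w u = s * (s - u p) by rewrite dotwE -s2; ring.
have ww : dotf w w = 2 * dotf w u.
  rewrite dotwE wu /w eqxx mulr1 (_ : dotf u w = dotf w u); last first.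
    by apply: eq_bigr => k _; rewrite mulrC.
  by rewrite wu; ring.
have ww_neq0 : dotf w w != 0 by rewrite ww wu !mulf_neq0 // pnatr_eq0.
exists (reflection w), s; split; first exact: inO_reflection.
  apply: ulblock_reflection => r pr; rewrite /w up //.
  by case: eqP pr => [->|_]; [rewrite ltnn | rewrite mulr0 subr0].
move=> a; rewrite reflectionE ww /w; field.
by rewrite wu !mulf_neq0 // pnatr_eq0.
Qed.

End Reflections.

Section Reduction.
Variable d : nat.
Implicit Types (z : Vt d) (H : 'M[Cx]_d).

Lemma reduce_vec z : (0 < d)%N -> inV z -> gram 1 z != 0 ->
  exists H, [/\ inO H, ulblock d H & slice 1 (act H z)].
Proof.
move=> d0 Vz Gz; have pd : (d.-1 < d)%N by lia.
have vp : forall r : 'I_d, (Ordinal pd < r)%N -> z.1 r ord0 = 0.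
  by move=> r /=; move: (ltn_ord r); lia.
have vv : dotf (fun r => z.1 r ord0) (fun r => z.1 r ord0) != 0.
  by rewrite gram1 in Gz; rewrite /dotf (eq_bigr _ (fun r _ => esym (expr2 _))).
have [H [s [OH Hd Hv]]] := householder vp vv.
exists H; rewrite /= (prednK d0) in Hd; split=> //; split; first exact: act_inV.
  by move=> _ r rd; rewrite /act /= mxE Hv; case: eqP rd => [->/=|_]; [lia | rewrite mulr0].
by move=> r j; move: (ltn_ord j); lia.
Qed.

(* [H] only mixes the first [j] coordinates, where the columns right of [j]
   already vanish; so they keep their shape while column [j] is reduced. *)
Lemma reduce_col (j : 'I_d) z : (0 < j)%N -> slice (d - j) z -> colsq_above j z != 0 ->
  exists H, [/\ inO H, ulblock j H & slice (d - j).+1 (act H z)].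
Proof.
move=> j0 [Vz vz Mz] Cz; have jd := ltn_ord j; have pd : (j.-1 < d)%N by lia.
pose u (r : 'I_d) := if (r < j)%N then z.2 r j else 0.
have up : forall r : 'I_d, (Ordinal pd < r)%N -> u r = 0.
  by move=> r /= jr; rewrite /u ifF //; apply/negbTE; rewrite -leqNgt; lia.
have uu : dotf u u != 0.
  rewrite (_ : dotf u u = colsq_above j z) // /colsq_above [RHS]big_mkcond.
  by apply: eq_bigr => r _; rewrite /u; case: ifP; rewrite ?mulr0 ?expr2.
have [H [s [OH Hj Hu]]] := householder up uu.
rewrite /= (prednK j0) in Hj; exists H; split=> //; split; first exact: act_inV.
  move=> _ r rd; rewrite /act /= (ulblock_mulmx_col (n := j)) //; first by apply: vz; lia.
  by move=> k kj; apply: vz; lia.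
move=> r k jk rk; rewrite /act /= (mulmx_tr_ulblock (n := j)) //; last by lia.
case: (ltngtP j k) => [jk'|kj|/val_inj kj]; last 2 first.
- by move: jk; lia.
- pose W := \col_k (if (k < j)%N then 0 else z.2 k j) : 'cV[Cx]_d.
  have HM : (H *m z.2) r j = \sum_k H r k * u k + (H *m W) r ord0.
    rewrite !mxE -big_split /=; apply: eq_bigr => l _.
    by rewrite mxE /u; case: ifP => _; ring.
  have HW : (H *m W) r ord0 = W r ord0.
    by apply: (ulblock_mulmx_col r Hj) => l lj; rewrite mxE lj.
  rewrite -kj HM Hu HW mxE ifT; last by rewrite -kj in rk; lia.
  by case: eqP rk => [->/=|_]; [rewrite -kj; lia | rewrite mulr0 addr0].
- rewrite (ulblock_mulmx_col (n := j)) //; first by apply: Mz => //; lia.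
  by move=> l lj; apply: Mz; lia.
Qed.

Lemma sumsq_inO H (w : 'cV[Cx]_d) : inO H ->
  \sum_r (H *m w) r ord0 ^+ 2 = \sum_r w r ord0 ^+ 2.
Proof.
move=> OH; have /matrixP/(_ ord0 ord0) : (H *m w)^T *m (H *m w) = w^T *m w.
  by rewrite trmx_mul mulmxA -(mulmxA _ H^T) inO_trmxK // mulmx1.
rewrite [LHS]mxE [RHS]mxE => ww.
rewrite (eq_bigr (fun r => (H *m w)^T ord0 r * (H *m w) r ord0)); last first.
  by move=> r _; rewrite [_^T _ _]mxE expr2.
by rewrite ww; apply: eq_bigr => r _; rewrite [_^T _ _]mxE expr2.
Qed.

Lemma colsq_above_act n H (j : 'I_d) z : inO H -> ulblock n H -> (n <= j)%N ->
  colsq_above j (act H z) = colsq_above j z.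
Proof.
move=> OH Hn nj; pose w := col j z.2.
have Mj r : (act H z).2 r j = (H *m w) r ord0.
  rewrite /act /= (mulmx_tr_ulblock _ _ Hn) // !mxE.
  by apply: eq_bigr => k _; rewrite mxE.
have Hw (r : 'I_d) : (j <= r)%N -> (H *m w) r ord0 = w r ord0.
  move=> jr; rewrite mxE -(sum_kronecker_l r (fun k => w k ord0)).
  by apply: eq_bigr => k _; rewrite Hn 1?eq_sym //; apply/orP; left; lia.
have sum_above (F : 'I_d -> Cx) :
    \sum_(r < d | (r < j)%N) F r = \sum_r F r - \sum_(r < d | ~~ (r < j)%N) F r.
  by rewrite [in RHS](bigID (fun r : 'I_d => (r < j)%N)) /= addrK.
rewrite /colsq_above (eq_bigr (fun r => (H *m w) r ord0 ^+ 2)) => [|r _]; last by rewrite Mj.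
rewrite sum_above sumsq_inO //.
rewrite (eq_bigr (P := fun r : 'I_d => ~~ (r < j)%N) (fun r => w r ord0 ^+ 2)); last first.
  by move=> r; rewrite -leqNgt => jr; rewrite Hw.
by rewrite -sum_above; apply: eq_bigr => r _; rewrite mxE.
Qed.

End Reduction.

Section ReducedForm.
Variable n : nat.
Local Notation d := n.+1.
Implicit Types (z : Vt d).

Lemma reducedP z : slice d.-1 z ->
  (forall r : 'I_d, (r < d.-1)%N -> z.1 r ord0 = 0) /\
  (forall r j : 'I_d, (r.+1 < j)%N -> z.2 r j = 0).
Proof.
by case=> _ vz Mz; split=> [r rd|r j rj]; [apply: vz => //; lia | apply: Mz => //; lia].
Qed.

Lemma krylov_vec_reduced_eq0 z m (r : 'I_d) : slice d.-1 z -> (r + m < d.-1)%N ->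
  krylov_vec m z r ord0 = 0.
Proof.
move=> /reducedP [vz Mz]; elim: m r => [|m IHm] r rm.
  by rewrite /krylov_vec expr0 mul1mx; apply: vz; lia.
rewrite krylov_vecS mxE big1 // => c _.
by case: (ltnP (c + m) d.-1) => cm; [rewrite IHm ?mulr0 | rewrite Mz ?mul0r //; lia].
Qed.

Lemma krylov_vec_reducedS z m (r r' : 'I_d) : slice d.-1 z -> (r' : nat) = r.+1 ->
  (r + m.+1)%N = d.-1 -> krylov_vec m.+1 z r ord0 = z.2 r r' * krylov_vec m z r' ord0.
Proof.
move=> Rz r'E rm; have [_ Mz] := reducedP Rz.
rewrite krylov_vecS mxE (bigD1 r') //= big1 ?addr0 // => c cr'.
case: (ltnP (c + m) d.-1) => cm; first by rewrite krylov_vec_reduced_eq0 ?mulr0.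
have : (c : nat) != r' by apply: contra cr' => /eqP cE; apply/eqP/val_inj.
by move=> ?; rewrite Mz ?mul0r //; lia.
Qed.

(* On a reduced point the Krylov matrix is triangular along the antidiagonal:
   its column [s] ends at row [pivot s]. *)
Definition pivot s : 'I_d := inord (d.-1 - s).

Definition pivot_entry s z := krylov_vec s z (pivot s) ord0.

Lemma pivotE s : (pivot s : nat) = (d.-1 - s)%N.
Proof. by rewrite /pivot inordK //; lia. Qed.

Lemma pivot_entryS z s : slice d.-1 z -> (s < d.-1)%N ->
  pivot_entry s.+1 z = z.2 (pivot s.+1) (pivot s) * pivot_entry s z.
Proof.
by move=> Rz sd; rewrite /pivot_entry (krylov_vec_reducedS (r' := pivot s)) // !pivotE; lia.
Qed.

Lemma gram_reduced z j : slice d.-1 z -> (j <= d)%N ->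
  gram j z = (\prod_(s < j) pivot_entry s z) ^+ 2.
Proof.
move=> Rz jd.
pose T := \matrix_(s < j, m < j) krylov j z (pivot s) m.
pose P := \matrix_(r < d, s < j) ((r == pivot s)%:R : Cx).
have pivot_inj (s s' : 'I_j) : (pivot s == pivot s') = (s == s').
  apply/eqP/eqP => [/(congr1 val)|->] //=; rewrite !pivotE => ss'.
  by apply: ord_inj; move: (ltn_ord s) (ltn_ord s') ss'; lia.
have KPT : krylov j z = P *m T.
  apply/matrixP => r m; rewrite [RHS]mxE; case: (ltnP r (d - j)) => rj.
    have -> : krylov j z r m = 0.
      by rewrite krylovE krylov_vec_reduced_eq0 //; move: (ltn_ord m); lia.
    rewrite big1 // => s _; rewrite [P _ _]mxE.
    have [rs|_] := eqVneq r (pivot s); last by rewrite mul0r.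
    by move: rj (ltn_ord s); rewrite rs pivotE; lia.
  have sj : (d.-1 - r < j)%N by move: (ltn_ord r); lia.
  have pr : pivot (Ordinal sj) = r.
    by apply: ord_inj; rewrite pivotE /=; move: (ltn_ord r); lia.
  have -> : \sum_s P r s * T s m = \sum_s (s == Ordinal sj)%:R * T s m.
    by apply: eq_bigr => s _; rewrite [P _ _]mxE -pivot_inj pr eq_sym.
  by rewrite sum_kronecker_l [T _ _]mxE pr.
have PP : P^T *m P = 1%:M.
  apply/matrixP => s s'; rewrite !mxE.
  rewrite (eq_bigr (fun r => (r == pivot s)%:R * (pivot s' == r)%:R)).
    by rewrite sum_kronecker_l pivot_inj eq_sym.
  by move=> r _; rewrite !mxE (eq_sym (pivot s')).
have trigT : is_trig_mx T^T.
  apply/is_trig_mxP => a b ab.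
  rewrite [T^T _ _]mxE [T _ _]mxE krylovE krylov_vec_reduced_eq0 // pivotE.
  by move: (ltn_ord b); lia.
rewrite /gram KPT trmx_mul -mulmxA (mulmxA P^T) PP mul1mx det_mulmx det_tr.
rewrite -(det_tr T) det_trig // expr2.
by congr (_ * _); apply: eq_bigr => s _; rewrite [T^T _ _]mxE [T _ _]mxE krylovE.
Qed.

Lemma colsq_above_reduced z (j j' : 'I_d) : slice d.-1 z -> (j'.+1 = j)%N ->
  colsq_above j z = z.2 j' j ^+ 2.
Proof.
move=> Rz j'j; have [_ Mz] := reducedP Rz.
rewrite /colsq_above (bigD1 j') /=; last by lia.
rewrite big1 ?addr0 // => r /andP [rj rj'].
have : (r : nat) != j' by apply: contra rj' => /eqP rE; apply/eqP/val_inj.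
by move=> ?; rewrite Mz ?expr0n //; lia.
Qed.

Lemma gram_recurrence_reduced z k : slice d.-1 z -> (2 <= k <= d)%N ->
  colsq_above (inord (d - k + 1)) z * gram k.-1 z ^+ 2 = gram k z * gram k.-2 z.
Proof.
case: k => [|[|k]] //= Rz kd; rewrite !gram_reduced //; try lia.
rewrite !big_ord_recr /=.
have -> : (inord (d - k.+2 + 1) : 'I_d) = pivot k.
  by apply: ord_inj; rewrite pivotE inordK //; lia.
rewrite (colsq_above_reduced (j' := pivot k.+1)) //; last by rewrite !pivotE; lia.
rewrite pivot_entryS //; ring.
Qed.

Definition base_point : Vt d :=
  (\col_r ((r == pivot 0)%:R), \matrix_(a, b) ((a.+1 == b)%:R - (b.+1 == a)%:R)).

Lemma slice_base_point : slice d.-1 base_point.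
Proof.
split; first by apply/matrixP => a b; rewrite !mxE opprB.
  by move=> _ r rd; rewrite mxE; case: eqP rd => // ->; rewrite pivotE; lia.
move=> r j _ rj; rewrite mxE.
have /negbTE -> : r.+1 != j :> nat by lia.
have /negbTE -> : j.+1 != r :> nat by lia.
by rewrite subrr.
Qed.

Lemma pivot_entry_base_point s : (s < d)%N -> pivot_entry s base_point = 1.
Proof.
elim: s => [|s IHs] sd; first by rewrite /pivot_entry /krylov_vec expr0 mul1mx mxE eqxx.
rewrite pivot_entryS ?IHs ?mulr1 ?mxE; try (exact: slice_base_point || lia).
have -> : (pivot s.+1).+1 = pivot s by rewrite !pivotE; lia.
have /negbTE -> : (pivot s).+1 != pivot s.+1 :> nat by rewrite !pivotE; lia.
by rewrite eqxx subr0.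
Qed.

Lemma gram_base_point j : (j <= d)%N -> gram j base_point = 1.
Proof.
move=> jd; rewrite (gram_reduced slice_base_point jd) big1 ?expr1n // => s _.
by apply: pivot_entry_base_point; move: (ltn_ord s); lia.
Qed.

Lemma colsq_above_base_point (j : 'I_d) : (0 < j)%N -> colsq_above j base_point = 1.
Proof.
move=> j0; have j'd : (j.-1 < d)%N by move: (ltn_ord j); lia.
rewrite (colsq_above_reduced (j' := Ordinal j'd) slice_base_point) /=; last by lia.
rewrite mxE /= prednK // eqxx.
have /negbTE -> : j.+1 != j.-1 :> nat by lia.
by rewrite subr0 expr1n.
Qed.

End ReducedForm.

Section GramRecurrence.
Variable n : nat.
Local Notation d := n.+1.
Implicit Types (y z : Vt d) (A H : 'M[Cx]_d).

(* For [j = d - k + 1], [colsq_above j] is [f_k] restricted to [L^(k-1)], so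
   this says [f_k = G_k G_(k-2) / G_(k-1)^2] there. *)
Definition gram_recurrence k := forall z, slice k.-1 z ->
  colsq_above (inord (d - k + 1)) z * gram k.-1 z ^+ 2 = gram k z * gram k.-2 z.

Definition grams_neq0 z := forall j, (j < d)%N -> gram j z != 0.

Lemma grams_neq0_act A z : inO A -> grams_neq0 z -> grams_neq0 (act A z).
Proof. by move=> OA Gz j jd; rewrite gram_act // Gz. Qed.

Lemma grams_neq0_prod z : \prod_(j < d) gram j z != 0 -> grams_neq0 z.
Proof.
by move=> Gz j jd; apply: contra Gz => /eqP G0; rewrite (bigD1 (Ordinal jd)) //= G0 mul0r.
Qed.

Lemma reduce_step i z : (i < d.-1)%N -> ((0 < i)%N -> gram_recurrence i.+1) ->
  slice i z -> grams_neq0 z ->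
  exists H, [/\ inO H, ulblock (d - i) H & slice i.+1 (act H z)].
Proof.
case: i => [|i] id rec Sz Gz.
  have Vz : inV z by case: Sz.
  have [|H [OH Hd SHz]] := reduce_vec (ltn0Sn n) Vz (Gz 1%N _) => //.
  by exists H; rewrite subn0.
have jd : (d - i.+1 < d)%N by lia.
have := rec isT z Sz; rewrite /= (_ : inord _ = Ordinal jd); last first.
  by apply: ord_inj; rewrite inordK //=; lia.
move=> recz; have Cz : colsq_above (Ordinal jd) z != 0.
  apply: contraNneq (mulf_neq0 (Gz i.+2 _) (Gz i _)) => [C0||]; try lia.
  by rewrite -recz C0 mul0r.
have dj : (d - Ordinal jd = i.+1)%N by rewrite /= subKn //; lia.
have Sz' : slice (d - Ordinal jd) z by rewrite dj.
have [|H [OH Hj]] := reduce_col _ Sz' Cz; first by rewrite /=; lia.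
by rewrite dj => SHz; exists H.
Qed.

Lemma reduce_to_top i z : (i <= d.-1)%N ->
  (forall k, (i < k < d)%N -> (1 < k)%N -> gram_recurrence k) ->
  slice i z -> grams_neq0 z ->
  exists A, [/\ inO A, ulblock (d - i) A & slice d.-1 (act A z)].
Proof.
move=> id; move: {2}(d.-1 - i)%N (erefl (d.-1 - i)%N) => m.
elim: m i id z => [|m IHm] i id z mE rec Sz Gz.
  have iE : i = d.-1 by lia.
  by exists 1%:M; rewrite act1 -iE; split; [apply: inO1 | apply: ulblock1 |].
have [||H [OH Hi SHz]] := reduce_step (i := i) _ _ Sz Gz; first by lia.
  by move=> i0; apply: rec; lia.
have [|||A [OA Ai SAHz]] := IHm i.+1 _ (act H z) _ _ SHz (grams_neq0_act OH Gz); try lia.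
  by move=> k /andP [ik kd] k1; apply: rec => //; lia.
exists (A *m H); rewrite act_mul; split=> //; first exact: inO_mul.
by apply: ulblock_mul => //; apply: ulblock_le Ai; lia.
Qed.

(* By density it is enough to treat points of [slice k.-1] where [colsq_above j]
   and all Gram determinants are nonzero; reflecting column [j] and then the
   later columns brings such a point to reduced form without changing either
   side of the identity. *)
Lemma gram_recurrence_step k : (1 < k < d)%N ->
  (forall k', (k < k' < d)%N -> gram_recurrence k') -> gram_recurrence k.
Proof.
move=> /andP [k1 kd] rec z; set j : 'I_d := inord (d - k + 1).
have jE : (j : nat) = (d - k + 1)%N by rewrite inordK //; lia.
pose Q z := colsq_above j z * \prod_(i < d) gram i z.
move=> Sz; apply/eqP; rewrite -subr_eq0; apply/eqP; move: z Sz.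
apply: (linepoly_mul_eq0 (S := slice k.-1) (G := Q)); first exact: line_closed_slice.
- apply: linepoly_sub; last by apply: linepoly_mul; apply: linepoly_gram.
  by apply: linepoly_mul; [apply: linepoly_colsq_above | apply/linepoly_exp/linepoly_gram].
- apply: linepoly_mul; first exact: linepoly_colsq_above.
  by apply: linepoly_prod => i; apply: linepoly_gram.
- exists (base_point n); split; first by apply: slice_le (slice_base_point n); lia.
  rewrite /Q mulf_neq0 //; first by rewrite colsq_above_base_point ?oner_neq0 //; lia.
  rewrite prodf_seq_neq0; apply/allP => i _; apply/implyP => _.
  by rewrite gram_base_point ?oner_neq0 //; move: (ltn_ord i); lia.
move=> y Sy; have [Q0|] := eqVneq (Q y) 0; first by rewrite Q0 mul0r.
rewrite mulf_eq0 negb_or => /andP [Cy /grams_neq0_prod Gy].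
apply/eqP; rewrite mulf_eq0 subr_eq0; apply/orP; right; apply/eqP.
have Sy' : slice (d - j) y by rewrite jE (_ : d - (d - k + 1) = k.-1)%N //; lia.
have [|H [OH Hj]] := reduce_col _ Sy' Cy; first by rewrite jE; lia.
rewrite (_ : (d - j).+1 = k)%N => [SHy|]; last by rewrite jE; lia.
have [||A [OA Ak SAHy]] := reduce_to_top _ _ SHy (grams_neq0_act OH Gy).
- by lia.
- by move=> k' /andP [kk' k'd] _; apply: rec; lia.
have /(gram_recurrence_reduced SAHy) : (1 < k <= d)%N by lia.
rewrite -/j !gram_act // => <-.
by rewrite (colsq_above_act (n := (d - k)%N)) ?(colsq_above_act (n := j)) //; lia.
Qed.

Lemma gram_recurrence_all k : (1 < k <= d)%N -> gram_recurrence k.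
Proof.
move: {2}(d - k)%N (leqnn (d - k)) => m; elim: m k => [|m IHm] k dk /andP [k1 kd].
  have kE : k = d by lia.
  by rewrite kE => z Sz; apply: (gram_recurrence_reduced Sz); lia.
have [dk'|dk'] := leqP (d - k) m; first by apply: IHm; lia.
by apply: gram_recurrence_step => [|k' /andP [kk' k'd]]; [lia | apply: IHm; lia].
Qed.

Lemma reduce_inV y : inV y -> grams_neq0 y -> exists A, inO A /\ slice d.-1 (act A y).
Proof.
move=> Vy Gy; have [||A [OA _ SAy]] := reduce_to_top (i := 0) _ _ (slice0 Vy) Gy => //.
  by move=> k /andP [k0 kd] k1; apply: gram_recurrence_all; lia.
by exists A.
Qed.

End GramRecurrence.

Lemma ratio_chain_neq0 (R : idomainType) (G v : nat -> R) d :
  G 0 = 1 -> v 1 = G 1 ->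
  (forall k, (1 < k <= d)%N -> v k * G k.-1 ^+ 2 = G k * G k.-2) ->
  (forall k, (0 < k <= d)%N -> v k != 0) -> forall j, (j <= d)%N -> G j != 0.
Proof.
move=> G0 v1 Gv v0; elim=> [|[|j] IHj] jd; first by rewrite G0 oner_neq0.
  by rewrite -v1 v0.
have : v j.+2 * G j.+1 ^+ 2 != 0 by rewrite mulf_neq0 ?expf_neq0 ?v0 ?IHj //; lia.
by rewrite Gv ?mulf_eq0 ?negb_or => [/andP []|]; lia.
Qed.

Section RationalInvariants.
Variable n : nat.
Local Notation d := n.+1.
Implicit Types (y z : Vt d) (f g : ratfun d) (R S : Vt d -> Cx).

Definition rf_mul_eq f R S := forall y, inV y -> num f y * R y = den f y * S y.

Lemma linepoly_num f : linepoly (num f).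
Proof. exact/linepoly_polyfun/num_poly. Qed.

Lemma linepoly_den f : linepoly (den f).
Proof. exact/linepoly_polyfun/den_poly. Qed.

Lemma rf_mul_eq_transfer f g R S : linepoly R -> linepoly S -> rf_eq f g ->
  rf_mul_eq g R S -> rf_mul_eq f R S.
Proof.
move=> lR lS fg gRS y Vy; apply/eqP; rewrite -subr_eq0; apply/eqP; move: y Vy.
have lf : linepoly (fun y => num f y * R y - den f y * S y).
  apply: linepoly_sub; apply: linepoly_mul => //.
    exact: linepoly_num.
  exact: linepoly_den.
apply: (linepoly_mul_eq0 (@line_closed_inV d) lf (linepoly_den g) (den_nz g)).
move=> y Vy; move: (fg y Vy) (gRS y Vy).
set a := num f y; set b := den f y; set c := num g y; set e := den g y => ag cR.
rewrite (_ : e * _ = a * e * R y - b * (e * S y)); last by ring.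
by rewrite ag -cR; ring.
Qed.

Lemma rf_invariant_eq f g : rf_eq f g -> rf_invariant f -> rf_invariant g.
Proof.
move=> fg If B OB y Vy; apply/eqP; rewrite -subr_eq0; apply/eqP; move: y Vy.
have lg : linepoly (fun y => num g (act B y) * den g y - num g y * den g (act B y)).
  apply: linepoly_sub; apply: linepoly_mul; try exact: linepoly_num; try exact: linepoly_den.
    exact/linepoly_act/linepoly_num.
  exact/linepoly_act/linepoly_den.
apply: (linepoly_mul_eq0 (@line_closed_inV d) lg (linepoly_den f) (den_nz f)).
have [y0 [Vy0 fy0]] := den_nz f.
have fB0 : exists y1, inV y1 /\ den f (act B y1) != 0.
  by exists (act B^T y0); rewrite act_Ktr //; split=> //; apply: act_inV.
have lfg : linepoly (fun y => den f y *
    (num g (act B y) * den g y - num g y * den g (act B y))).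
  exact/linepoly_mul/lg/linepoly_den.
apply: (linepoly_mul_eq0 (@line_closed_inV d) lfg (linepoly_act B (linepoly_den f)) fB0).
move=> y Vy; move: (fg y Vy) (fg _ (act_inV B Vy)) (If B OB y Vy).
set a0 := num f y; set a1 := num f (act B y); set b0 := den f y; set b1 := den f (act B y).
set c0 := num g y; set c1 := num g (act B y); set e0 := den g y; set e1 := den g (act B y).
move=> E0 E1 Ef.
rewrite (_ : b1 * _ = b0 * e0 * (c1 * b1) - b1 * e1 * (c0 * b0)); last by ring.
rewrite -E0 -E1 (_ : _ - _ = e0 * e1 * (a1 * b0 - a0 * b1)); last by ring.
by rewrite Ef subrr mulr0.
Qed.

(* An identity between invariants that holds on a slice holds on all of [V]:
   the orbits of the slice are dense, since every point where the Gram
   determinants do not vanish can be moved into it. *)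
Lemma rf_mul_eq_of_slice i g R S : (i <= d.-1)%N -> rf_invariant g ->
  linepoly R -> linepoly S ->
  (forall A y, inO A -> R (act A y) = R y) -> (forall A y, inO A -> S (act A y) = S y) ->
  (exists x0, slice i x0 /\ den g x0 != 0) ->
  (forall z, slice i z -> num g z * R z = den g z * S z) -> rf_mul_eq g R S.
Proof.
move=> id Ig lR lS IR IS g0 gRS.
pose Phi y := num g y * R y - den g y * S y.
have lPhi : linepoly Phi.
  apply: linepoly_sub; apply: linepoly_mul => //.
    exact: linepoly_num.
  exact: linepoly_den.
have Phi_orbit A z : inO A -> slice i z -> Phi (act A z) = 0.
  move=> OA; move: z.
  apply: (linepoly_mul_eq0 (@line_closed_slice d i) (linepoly_act A lPhi) (linepoly_den g) g0).
  move=> z Sz; have Vz : inV z by case: Sz.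
  move: (Ig A OA z Vz) (gRS z Sz); rewrite /Phi IR // IS //.
  set c1 := num g (act A z); set e1 := den g (act A z) => gA gz.
  rewrite (_ : den g z * _ = c1 * den g z * R z - den g z * e1 * S z); last by ring.
  rewrite gA (_ : _ - _ = e1 * (num g z * R z - den g z * S z)); last by ring.
  by rewrite gz subrr mulr0.
move=> y Vy; apply/eqP; rewrite -subr_eq0; apply/eqP; move: y Vy.
have lQ : linepoly (fun y => \prod_(j < d) gram j y).
  by apply: linepoly_prod => j; apply: linepoly_gram.
apply: (linepoly_mul_eq0 (@line_closed_inV d) lPhi lQ).
  exists (base_point n); split; first by case: (slice_base_point n).
  rewrite prodf_seq_neq0; apply/allP => j _; apply/implyP => _.
  by rewrite gram_base_point ?oner_neq0 //; move: (ltn_ord j); lia.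
move=> y Vy; have [->|/grams_neq0_prod Gy] := eqVneq (\prod_(j < d) gram j y) 0.
  by rewrite mul0r.
have [A [OA SAy]] := reduce_inV Vy Gy.
rewrite -(act_trK y OA) Phi_orbit ?mulr0 //; first exact: inO_tr.
by apply: slice_le SAy; lia.
Qed.

Lemma rf_value_mul_eq f x v R S : linepoly R -> linepoly S ->
  rf_value_at f x v -> rf_mul_eq f R S -> v * R x = S x.
Proof.
move=> lR lS [Vx [g [fg [gx ->]]]] fRS.
have gf : rf_eq g f by move=> y Vy; rewrite fg.
have := rf_mul_eq_transfer lR lS gf fRS Vx.
by move=> gRS; rewrite mulrAC gRS mulrAC mulfV ?mul1r.
Qed.

Lemma f_family_gram1 (f : nat -> ratfun d) : is_f_family f ->
  rf_mul_eq (f 1%N) (fun _ => 1) (gram 1).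
Proof. by case=> f1 _ y Vy; rewrite mulr1 f1 // f1_polyE mulrC. Qed.

Lemma f_family_restricts (f : nat -> ratfun d) k : is_f_family f -> (1 < k <= d)%N ->
  rf_restricts_to (f k) (Lslice k.-1) (fi_target k).
Proof.
case=> _ [_ [fi [g [fg [gL fdL]]]]] kd; have [kE|kd'] := eqVneq k d; last by apply: fi; lia.
by rewrite kE; exists g; do !split=> //; move=> y /fdL ->; rewrite fd_targetE.
Qed.

Lemma f_family_gram (f : nat -> ratfun d) k : is_f_family f -> (1 < k <= d)%N ->
  rf_mul_eq (f k) (fun y => gram k.-1 y ^+ 2) (fun y => gram k y * gram k.-2 y).
Proof.
move=> Ff kd; have [g [fg [[x0 [Lx0 gx0]] gL]]] := f_family_restricts Ff kd.
have [_ [If _]] := Ff.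
have lR : linepoly (fun y => gram k.-1 y ^+ 2) by apply/linepoly_exp/linepoly_gram.
have lS : linepoly (fun y => gram k y * gram k.-2 y).
  by apply: linepoly_mul; apply: linepoly_gram.
apply: (rf_mul_eq_transfer lR lS fg); apply: (rf_mul_eq_of_slice (i := k.-1)) => //.
- by lia.
- by apply: (rf_invariant_eq fg); apply: If; lia.
- by move=> A y OA; rewrite gram_act.
- by move=> A y OA; rewrite !gram_act.
- by exists x0; rewrite -LsliceE //; lia.
move=> z Sz; rewrite gL; last by rewrite LsliceE //; lia.
rewrite (fi_targetE (j := inord (d - k + 1))) ?inordK //; try lia.
by rewrite mulrAC gram_recurrence_all // mulrC.
Qed.

End RationalInvariants.

Unset Implicit Arguments.

Theorem corollary3p9 (d : nat) (hd : (2 <= d)%N) (f : nat -> ratfun d) :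
  is_f_family f ->
  forall x : Vt d, in_U f x ->
  forall A : 'M[Cx]_d, inO A -> act A x = x -> A = 1%:M.
Proof.
case: d hd f => [|[|n]] // _ f Ff x [_ [vals [fx vals_neq0]]] A OA Ax.
apply: (inO_fix_gram_neq0 OA Ax).
apply: (@ratio_chain_neq0 _ (fun j => gram j x) vals n.+2 _ _ _ _ n.+2 (leqnn _)).
- exact: gram0.
- rewrite -[vals 1%N]mulr1; apply: (rf_value_mul_eq _ _ (fx 1%N isT) (f_family_gram1 Ff)).
    exact: linepoly_const.
  exact: linepoly_gram.
- move=> k kd; apply: (rf_value_mul_eq _ _ (fx k _) (f_family_gram Ff kd)).
  + exact/linepoly_exp/linepoly_gram.
  + by apply: linepoly_mul; apply: linepoly_gram.
  + by lia.
- move=> k kd; move: vals_neq0; rewrite prodf_seq_neq0 => /allP /(_ k).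
  by rewrite mem_index_iota ltnS kd => /(_ isT).
Qed.
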